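(* Let $(E,\mathscr{T},\le)$ be a locally compact $T_2$-preordered Tychonoff space with $G(\le)=\bigcap_{f\in\mathcal{F}}G_f$, and let $\mathcal{H}\subseteq\mathcal{F}$ with $G(\le)=\bigcap_{h\in\mathcal{H}}G_h$. Then the $\mathcal{H}$-compactification $c:E\to cE$ is the smallest Hausdorff $T_2$-preorder compactification for which the functions in $\mathcal{H}$ are extendable as continuous isotone functions: it is a Hausdorff $T_2$-preorder compactification for which every $h\circ c^{-1}$, $h\in\mathcal{H}$, extends to a continuous isotone function on $cE$, and every Hausdorff $T_2$-preorder compactification $c':E\to c'E$ for which every $h\circ c'^{-1}$, $h\in\mathcal{H}$, extends to a continuous isotone function $c'E\to[0,1]$ dominates the $\mathcal{H}$-compactification.
   Context: $T_2$-preordered: the graph $G(\le)=\{(x,y):x\le y\}$ is closed in $E\times E$. $\mathcal{F}$ is the family of continuous isotone functions $f:E\to[0,1]$; $G_f=\{(x,y):f(x)\le f(y)\}$. $\mathcal{C}$ is the family of continuous functions $E\to[0,1]$ constant outside a compact set. The $\mathcal{H}$-compactification is $c:E\to[0,1]^{\mathcal{H}\cup\mathcal{C}}$, $c(x)=(g(x))_{g\in\mathcal{H}\cup\mathcal{C}}$, with $cE$ the closure of $c(E)$, the induced product topology, and preorder $x\le_c y$ iff $x_h\le y_h$ for all $h\in\mathcal{H}$. A Hausdorff $T_2$-preorder compactification of $E$ is a preorder embedding (continuous isotone injective, homeomorphism onto image, isotone inverse on image with induced preorder) $c:E\to cE$ with dense image into a compact Hausdorff space with a preorder having closed graph. $c_2$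 dominates $c_1$ if there is a continuous isotone $C:c_2E\to c_1E$ with $C\circ c_2=c_1$. *)

From HB Require Import structures.
From mathcomp Require Import all_boot all_order all_algebra.
From mathcomp Require Import all_classical all_reals all_analysis.
Import numFieldNormedType.Exports.
Import Order.TTheory GRing.Theory Num.Theory.

Set Implicit Arguments.
Unset Strict Implicit.
Unset Printing Implicit Defensive.

Local Open Scope classical_set_scope.
Local Open Scope ring_scope.

Section Defs.
Variable R : realType.

Definition is_preorder (T : Type) (le : T -> T -> Prop) : Prop :=
  (forall x, le x x) /\ (forall x y z, le x y -> le y z -> le x z).

Definition T2_preordered (T : topologicalType) (le : T -> T -> Prop) : Prop :=
  closed [set p : T * T | le p.1 p.2].

Definition isotone (T : Type) (le : T -> T -> Prop) (f : T -> R) : Prop :=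
  forall x y, le x y -> f x <= f y.

Definition unit_valued (T : Type) (f : T -> R) : Prop :=
  forall x, 0 <= f x <= 1.

Definition Ffam (E : topologicalType) (le : E -> E -> Prop) : set (E -> R) :=
  [set f | [/\ continuous f, isotone le f & unit_valued f]].

(** G(le) = intersection of the G_f, f in a family Fs. *)
Definition graph_determined (E : Type) (le : E -> E -> Prop)
  (Fs : set (E -> R)) : Prop :=
  forall x y, le x y <-> (forall f, Fs f -> f x <= f y).

Definition Cfam (E : topologicalType) : set (E -> R) :=
  [set g | [/\ continuous g, unit_valued g &
     exists K : set E, compact K /\ exists a : R, forall x, ~ K x -> g x = a]].

(** Preorder embedding: continuous, isotone, injective, homeomorphism onto
    its image, with isotone inverse on the image (induced preorder). *)
Definition preorder_embedding (E K : topologicalType)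
  (leE : E -> E -> Prop) (leK : K -> K -> Prop) (c : E -> K) : Prop :=
  [/\ continuous c, injective c,
      (forall U : set E, open U ->
         exists V : set K, open V /\ c @` U = V `&` range c) &
      (forall x y, leE x y <-> leK (c x) (c y))].

Definition T2_preorder_compactification (E K : topologicalType)
  (leE : E -> E -> Prop) (leK : K -> K -> Prop) (c : E -> K) : Prop :=
  [/\ compact [set: K], hausdorff_space K,
      is_preorder leK /\ T2_preordered leK,
      preorder_embedding leE leK c & dense (range c)].

Definition extendable (E K : topologicalType) (leK : K -> K -> Prop)
  (c : E -> K) (h : E -> R) : Prop :=
  exists F : K -> R, [/\ continuous F, isotone leK F, unit_valued F &
                         forall x, F (c x) = h x].

Definition dominates (E K1 K2 : topologicalType)
  (leK1 : K1 -> K1 -> Prop) (leK2 : K2 -> K2 -> Prop)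
  (c2 : E -> K2) (c1 : E -> K1) : Prop :=
  exists C : K2 -> K1, [/\ continuous C,
     (forall p q, leK2 p q -> leK1 (C p) (C q)) &
     forall x, C (c2 x) = c1 x].

Section HComp.
Variables (E : topologicalType) (H : set (E -> R)).

Definition HIdx : Type := {g : E -> R | (H `|` @Cfam E) g}.

Definition Hmap (x : E) : {ptws HIdx -> R} := fun i => sval i x.

Definition HcE_set : set {ptws HIdx -> R} := closure (range Hmap).

Definition HcE : topologicalType :=
  initial_topology (@sval _ (fun p => p \in HcE_set)).

Lemma Hmap_in (x : E) : Hmap x \in HcE_set.
Proof. by rewrite inE; apply: subset_closure; exists x. Qed.

Definition Hc (x : E) : HcE := exist _ (Hmap x) (Hmap_in x).

Definition Hle (p q : HcE) : Prop :=
  forall i : HIdx, H (sval i) -> sval p i <= sval q i.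

End HComp.
End Defs.

(* Evaluation embeds E into the cube [0,1]^(H u C), and by Tychonoff the
   closure of its image is compact; the H-coordinates give a closed preorder
   which restricts to the given one because H determines the graph of <=.
   Bump functions in C, which exist because E is locally compact and
   completely regular, make evaluation an embedding.  For minimality, take
   another compactification c' : E -> K.  Each h in H extends by hypothesis;
   each g in C extends because it is constant off a compact set, whose image
   is closed in K, and c'(E) is open in K.  The product of these extensions is
   a continuous isotone map K -> [0,1]^(H u C) with values in the closure of
   the image of E. *)

From HB Require Import structures.
From mathcomp Require Import all_boot all_order all_algebra.
From mathcomp Require Import all_classical all_reals all_analysis.
Import numFieldNormedType.Exports.
Import Order.TTheory GRing.Theory Num.Theory.
Local Open Scope classical_set_scope.
Local Open Scope ring_scope.

Lemma continuous_prod_topology (Z : topologicalType) (I : Type)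
    (K : I -> topologicalType) (f : Z -> prod_topology K) :
  (forall i, continuous (fun z => f z i)) -> continuous f.
Proof.
move=> fc z; apply/cvg_sup => i A /=.
rewrite nbhsE => -[B [[C oC <-] Cfz] BA].
have : nbhs z ((fun z => f z i) @^-1` C) by apply: fc; exact: open_nbhs_nbhs.
by rewrite nbhs_simpl /= nbhsE => -[D [oD Dz] DC]; exists D => // w /DC /BA.
Qed.

Lemma closed_le_continuous (R : realType) (T : topologicalType) (f g : T -> R) :
  continuous f -> continuous g -> closed [set x | f x <= g x].
Proof.
move=> fc gc; have -> : [set x | f x <= g x] = (f - g) @^-1` [set r | r <= 0].
  by apply/seteqP; split => x /=; rewrite !fctE subr_le0.
apply: preimage_closed; last exact: closed_le.
by move=> x _; exact: (@continuousB _ R^o _ f g x (fc x) (gc x)).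
Qed.

Section InitialSubset.
Context {T : topologicalType} (A : set T).
Local Notation Sub := (initial_topology (@sval T (fun p => p \in A))).

Lemma initial_subset_compact : compact A -> compact [set: Sub].
Proof.
move=> cA F FF _; pose G := (@sval T _) @ F.
have GA : G A.
  suff : F [set p : Sub | A (sval p)] by [].
  by apply: filterS (filterT (F := F)) => p _; exact: set_mem (proj2_sig p).
have [q [Aq cq]] := cA G (fmap_proper_filter _ FF) GA.
exists (exist _ q (mem_set Aq)); split => // B N FB; rewrite nbhsE.
move=> -[N' [[W oW <-] Wq] N'N].
have GB : G ((@sval T _) @` B).
  suff : F ((@sval T _) @^-1` ((@sval T _) @` B)) by [].
  by apply: filterS FB; exact: preimage_image.
have [_ [[b Bb <-] Wb]] := cq _ _ GB (open_nbhs_nbhs (conj oW Wq)).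
by exists b; split => //; exact: N'N.
Qed.

Lemma initial_subset_hausdorff : hausdorff_space T -> hausdorff_space Sub.
Proof.
move=> hT p q cpq; apply: eq_sig_hprop => [x|]; first exact: Prop_irrelevance.
apply: hT => U V nU nV.
have [r [Ur Vr]] := cpq _ _ (initial_continuous nU) (initial_continuous nV).
by exists (sval r).
Qed.

End InitialSubset.

Section LocallyCompact.
Context (R : realType) {E : topologicalType}.
Hypotheses (lcE : locally_compact [set: E]) (crE : completely_regular_space E).

(* Separate x from the complement of the interior of U `&` K, where K is a
   compact neighbourhood of x: the Urysohn function is then 1 outside K. *)
Lemma compact_support_bump {x : E} {U : set E} : open U -> U x ->
  exists g, [/\ @Cfam R E g, g x = 0 & forall z, g z < 1 -> U z].
Proof.
move=> oU Ux; have [K nK [cK _]] := lcE x Logic.I; rewrite withinET in nK.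
pose B := ~` interior (U `&` K).
have clB : closed B by rewrite closedC; exact: open_interior.
have nBx : ~ B x by apply; apply: filterI nK; exact: open_nbhs_nbhs.
have sep := crE x B clB nBx.
have g1 z : B z -> Urysohn [set x] B z = 1 :> R.
  by move=> Bz; apply: (@Urysohn_sub1 E R _ _ sep); exists z.
exists (Urysohn [set x] B); split.
- split; first exact: Urysohn_continuous.
  + move=> z; have /= := @Urysohn_range E R [set x] B _ (imageT _ z).
    by rewrite in_itv.
  + by exists K; split => //; exists 1 => z Kz; apply: g1 => /interior_subset [].
- by apply: (@Urysohn_sub0 E R _ _ sep); exists x.
- move=> z gz; apply: contrapT => Uz; move: gz; rewrite g1 ?ltxx //.
  by move=> /interior_subset [].
Qed.

End LocallyCompact.

Section DenseEmbedding.
Context {E K : topologicalType} {c : E -> K}.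
Hypotheses (lcE : locally_compact [set: E]) (hK : hausdorff_space K).
Hypotheses (c_cont : continuous c) (c_inj : injective c).
Hypothesis c_open : forall U : set E, open U ->
  exists V : set K, open V /\ c @` U = V `&` range c.
Hypothesis c_dense : dense (range c).

Lemma closed_image_compact (N : set E) : compact N -> closed (c @` N).
Proof.
move=> cN; apply: compact_closed hK _.
by apply: continuous_compact => //; exact: continuous_subspaceT.
Qed.

(* With c @` U = V `&` range c for U inside a compact neighbourhood N, density
   puts V in the closure of c @` U, hence in the closed set c @` N. *)
Lemma open_range_dense_embedding : open (range c).
Proof.
rewrite openE => _ [x _ <-]; have [N nN [cN _]] := lcE x Logic.I.
move: nN; rewrite withinET nbhsE => -[U [oU Ux] UN].
have [V [oV cUV]] := c_open _ oU.
have Vx : V (c x) by have [] : (V `&` range c) (c x) by rewrite -cUV; exists x.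
rewrite /interior nbhsE; exists V => // v Vv.
suff [z _ <-] : (c @` N) v by exists z.
apply: (closed_image_compact _ cN) => B; rewrite nbhsE => -[B0 [oB0 B0v] B0B].
have [w [[B0w Vw] [z _ ezw]]] : (B0 `&` V) `&` range c !=set0.
  by apply: c_dense; [exists v | exact: openI].
subst w.
have [u Uu ezu] : (c @` U) (c z) by rewrite cUV.
by exists (c z); split; [exists u => //; exact: UN | exact: B0B].
Qed.

Lemma continuous_extension_compact_support (Y : topologicalType)
    (g : E -> Y) (N : set E) (a : Y) :
  continuous g -> compact N -> (forall x, ~ N x -> g x = a) ->
  exists G : K -> Y, continuous G /\ forall x, G (c x) = g x.
Proof.
move=> gc cN ga.
pose G k := if pselect (exists x, c x = k) is left e then g (projT1 (cid e))
            else a.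
have Gc x : G (c x) = g x.
  rewrite /G; case: pselect => [e|]; last by case; exists x.
  by case: cid => z /= /c_inj ->.
have Ga k : ~ (c @` N) k -> G k = a.
  move=> Nk; rewrite /G; case: pselect => // e.
  by case: cid => z /= ez; apply: ga => Nz; apply: Nk; exists z.
exists G; split => // k; case: (pselect ((c @` N) k)) => [[x _ <-]|Nk].
  move=> A; rewrite Gc => /gc; rewrite nbhsE => -[U [oU Ux] UA].
  have [V [oV cUV]] := c_open _ oU.
  rewrite nbhsE; exists (V `&` range c).
    by split; [exact: openI _ open_range_dense_embedding | rewrite -cUV; exists x].
  by rewrite -cUV => _ [u Uu <-]; rewrite /= Gc; exact: UA.
move=> A; rewrite Ga // => /nbhs_singleton Aa; rewrite nbhsE.
exists (~` (c @` N)); first by split => //; rewrite openC; exact: closed_image_compact.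
by move=> k' Nk'; rewrite /= Ga.
Qed.

End DenseEmbedding.

Lemma range_subset_closure_dense (T U V : topologicalType) (c : T -> U)
    (f : U -> V) :
  continuous f -> dense (range c) -> range f `<=` closure (range (f \o c)).
Proof.
move=> fc cd _ [u _ <-] B /fc; rewrite nbhsE => -[B0 [oB0 B0u] B0B].
have [w [B0w [x _ cxw]]] := cd B0 (ex_intro _ u B0u) oB0.
by subst w; exists (f (c x)); split; [exists x | exact: B0B].
Qed.

Section HCompactification.
Context {R : realType} {E : topologicalType} (H : set (E -> R)).
Hypothesis H_cont_unit : forall h, H h -> continuous h /\ unit_valued h.
Local Notation I := (HIdx H).
Local Notation X := {ptws HIdx H -> R}.
Local Notation cE := (HcE H).

HB.instance Definition _ := gen_eqMixin I.

Lemma HIdx_cont_unit (i : I) : continuous (sval i) /\ unit_valued (sval i).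
Proof. by case: i => g /= [/H_cont_unit | []]. Qed.

Lemma HcE_coord_continuous (i : I) : continuous (fun p : cE => sval p i).
Proof.
move=> p.
apply: (@continuous_comp _ _ _ (fun p : cE => sval p) (fun f : X => f i)).
  exact: initial_continuous.
exact: (@proj_continuous I (fun=> R) i).
Qed.

Lemma Hc_continuous : continuous (@Hc R E H).
Proof.
apply: continuous_comp_initial; apply: continuous_prod_topology => i.
exact: (HIdx_cont_unit i).1.
Qed.

Definition unit_cube : set X := [set f | forall i, `[0, 1]%classic (f i)].

Lemma unit_cube_compact : compact unit_cube.
Proof. exact: tychonoff (fun _ => @segment_compact R 0 1). Qed.

Lemma HcE_set_unit_cube : @HcE_set R E H `<=` unit_cube.
Proof.
have cube_closed : closed unit_cube.
  apply: compact_closed unit_cube_compact.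
  exact: hausdorff_product (fun=> @Rhausdorff R).
move=> p Sp; rewrite [unit_cube](closure_id _).1 //; move: p Sp.
apply: closureS => _ [x _ <-] i /=; rewrite /Hmap in_itv /=.
exact: (HIdx_cont_unit i).2.
Qed.

Lemma HcE_compact : compact [set: cE].
Proof.
apply: initial_subset_compact.
apply: subclosed_compact unit_cube_compact HcE_set_unit_cube.
exact: closed_closure.
Qed.

Lemma HcE_hausdorff : hausdorff_space cE.
Proof.
exact/initial_subset_hausdorff/(hausdorff_product (fun=> @Rhausdorff R)).
Qed.

Lemma Hle_preorder : is_preorder (@Hle R E H).
Proof.
by split=> [p i _|p q r pq qr i Hi]; last exact: le_trans (pq i Hi) (qr i Hi).
Qed.

Lemma Hle_T2_preordered : T2_preordered (@Hle R E H).
Proof.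
rewrite /T2_preordered; have -> : [set pq : cE * cE | Hle pq.1 pq.2] =
    \bigcap_(i in [set i : I | H (sval i)])
      [set pq : cE * cE | sval pq.1 i <= sval pq.2 i].
  by apply/seteqP; split => pq Hpq i /Hpq.
apply: closed_bigI => i _; apply: closed_le_continuous => -[p q].
  apply: (@continuous_comp _ _ _ fst (fun p : cE => sval p i)).
    exact: cvg_fst.
  exact: HcE_coord_continuous.
apply: (@continuous_comp _ _ _ snd (fun p : cE => sval p i)).
  exact: cvg_snd.
exact: HcE_coord_continuous.
Qed.

Lemma Hle_Hc (le : E -> E -> Prop) : graph_determined le H ->
  forall x y, le x y <-> Hle (@Hc R E H x) (@Hc R E H y).
Proof.
move=> gd x y; rewrite gd; split=> [le_xy i Hi|le_xy f Hf]; first exact: le_xy.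
exact: (le_xy (exist _ f (or_introl Hf)) Hf).
Qed.

Lemma Hc_dense : dense (range (@Hc R E H)).
Proof.
move=> O [p Op] [W oW eW].
have nW : nbhs (sval p) W by apply: open_nbhs_nbhs; split => //; rewrite -eW in Op.
have [_ [[x _ <-] Wx]] := set_mem (svalP p) W nW.
by exists (@Hc R E H x); split; [rewrite -eW | exists x].
Qed.

Lemma Hc_extendable h : H h -> extendable (@Hle R E H) (@Hc R E H) h.
Proof.
move=> Hh; pose i : I := exist _ h (or_introl Hh).
exists (fun p : cE => sval p i); split => //.
- exact: HcE_coord_continuous.
- by move=> p q /(_ i Hh).
- move=> p; have := HcE_set_unit_cube _ (set_mem (svalP p)) i.
  by rewrite /= in_itv.
Qed.

Section LocallyCompactDomain.
Hypotheses (lcE : locally_compact [set: E]) (crE : completely_regular_space E).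

Lemma Hc_injective : hausdorff_space E -> injective (@Hc R E H).
Proof.
move=> hE x y exy; apply: contrapT => nxy.
have [A [oA xA yA]] := hausdorff_accessible hE (introN eqP nxy).
have [g [Cg gx gA]] := compact_support_bump R lcE crE oA (set_mem xA).
pose i : I := exist _ g (or_intror Cg).
have : sval (@Hc R E H x) i = sval (@Hc R E H y) i by rewrite exy.
rewrite /= /Hmap /= gx => gy; move: yA; rewrite inE; apply.
by apply: gA; rewrite -gy ltr01.
Qed.

Lemma Hc_open (U : set E) : open U ->
  exists V : set cE, open V /\ @Hc R E H @` U = V `&` range (@Hc R E H).
Proof.
move=> oU.
exists (\bigcup_(i in [set i : I | forall z, sval i z < 1 -> U z])
          [set p : cE | sval p i < 1]); split.
  apply: bigcup_open => i _.
  by have := HcE_coord_continuous i; rewrite continuousP => /(_ _ (@open_lt R 1)).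
apply/seteqP; split=> [_ [x Ux <-]|p [[i iU lt1] [x _ ex]]].
  have [g [Cg gx gU]] := compact_support_bump R lcE crE oU Ux.
  split; last by exists x.
  by exists (exist _ g (or_intror Cg)) => //=; rewrite /Hmap /= gx ltr01.
by exists x => //; apply: iU; rewrite -ex in lt1.
Qed.

Section Minimality.
Variables (K : topologicalType) (leK : K -> K -> Prop) (c : E -> K).
Hypothesis hK : hausdorff_space K.
Hypotheses (c_cont : continuous c) (c_inj : injective c).
Hypothesis c_open : forall U : set E, open U ->
  exists V : set K, open V /\ c @` U = V `&` range c.
Hypothesis c_dense : dense (range c).
Hypothesis H_ext : forall h, H h -> extendable leK c h.

Lemma HIdx_extension (i : I) : exists G : K -> R,
  [/\ continuous G, forall x, G (c x) = sval i x & H (sval i) -> isotone leK G].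
Proof.
have [Hi|nHi] := pselect (H (sval i)).
  by have [G [Gc Giso _ Gext]] := H_ext _ Hi; exists G.
have [gc _ [N [cN [a ga]]]] : Cfam (sval i) by case: (svalP i).
have [G [Gc Gext]] :=
  continuous_extension_compact_support lcE hK c_cont c_inj c_open c_dense
    _ _ _ _ gc cN ga.
by exists G.
Qed.

Lemma Hc_dominated : dominates (@Hle R E H) leK c (@Hc R E H).
Proof.
have [G GP] := choice HIdx_extension.
pose C (k : K) : X := fun i => G i k.
have C_cont : continuous C.
  by apply: continuous_prod_topology => i; case: (GP i).
have C_c : C \o c = @Hmap R E H.
  by apply/funext => x; apply/funext => i; rewrite /C /=; case: (GP i) => _ -> _.
have C_in k : C k \in @HcE_set R E H.
  by apply/mem_set; rewrite /HcE_set -C_c; apply: range_subset_closure_dense.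
exists (fun k => exist _ (C k) (C_in k)); split.
- exact/continuous_comp_initial.
- by move=> p q pq i Hi; case: (GP i) => _ _ /(_ Hi); apply.
- move=> x; apply: eq_sig_hprop => [y|]; first exact: Prop_irrelevance.
  by rewrite /= -C_c.
Qed.

End Minimality.

End LocallyCompactDomain.

End HCompactification.

Theorem mainTheorem16 (R : realType) (E : topologicalType)
  (le : E -> E -> Prop) (H : set (E -> R)) :
  locally_compact [set: E] ->
  completely_regular_space E -> hausdorff_space E ->
  is_preorder le -> T2_preordered le ->
  graph_determined le (@Ffam R E le) ->
  H `<=` @Ffam R E le ->
  graph_determined le H ->
  [/\ T2_preorder_compactification le (@Hle R E H) (@Hc R E H),
      (forall h, H h -> extendable (@Hle R E H) (@Hc R E H) h) &
      (forall (K : topologicalType) (leK : K -> K -> Prop) (c' : E -> K),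
         T2_preorder_compactification le leK c' ->
         (forall h, H h -> extendable leK c' h) ->
         dominates (@Hle R E H) leK c' (@Hc R E H))].
Proof.
move=> lcE crE hE _ _ _ HF gdH.
have H_cont_unit h : H h -> continuous h /\ unit_valued h by move=> /HF [].
split.
- split.
  + exact: HcE_compact.
  + exact: HcE_hausdorff.
  + by split; [exact: Hle_preorder | exact: Hle_T2_preordered].
  + split.
    * exact: Hc_continuous.
    * exact: Hc_injective.
    * exact: Hc_open.
    * exact: Hle_Hc.
  + exact: Hc_dense.
- exact: Hc_extendable.
- move=> K leK c' [_ hK _ [c'_cont c'_inj c'_open _] c'_dense] ext.
  exact: Hc_dominated.
Qed.
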